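(* Let $n \ge 1$ and let $X = [q_{ij}] \in \{0,1\}^{n\times n}$ be any infeasible solution, i.e. a binary $n\times n$ matrix in which at least one row sum or column sum differs from $1$. Run the Bit-Flip Heuristic Algorithm (BFHA), described in the context, on input $X$, with ties broken arbitrarily. Then the algorithm terminates, and its output is a feasible solution, i.e. a binary $n\times n$ matrix all of whose row sums and column sums equal $1$ (a permutation matrix).
   Context: A solution of the assignment/QAP constraints is a binary matrix $X=[q_{ij}]\in\{0,1\}^{n\times n}$. It is feasible if $\sum_{j=1}^n q_{ij}=1$ for every $i$ and $\sum_{i=1}^n q_{ij}=1$ for every $j$ (one-hot constraints on all rows and columns). Otherwise it is infeasible. For the current matrix $X$ define the violation matrix $V=[v_{ij}]$ by $v_{ij}=\sum_{l=1}^{n} q_{il}+\sum_{k=1}^{n} q_{kj}-2$. Then $X$ is feasible if and only if $V=0$. The Bit-Flip Heuristic Algorithm (BFHA) takes $X$ as input and, as long as $V\neq 0$, repeats the following step and then recomputes $V$ for the updated $X$: (i) If some entry of $V$ is $\ge 1$, choose a position $(i,j)$ with $q_{ij}=1$ whose value $v_{ij}$ is largest among all positions with $q_{ij}=1$, and set $q_{ij}:=0$. (ii) Otherwise, if some entry of $V$ is $\le -1$, choose a position $(i,j)$ with $q_{ij}=0$ whose value $v_{ij}$ is smallest among all positions with $q_{ij}=0$, and set $q_{ij}:=1$. When $V=0$ the algorithm stops and outputs the current $X$. *)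

From mathcomp Require Import all_boot all_order all_algebra.
From Stdlib Require Import Relations.
Set Implicit Arguments. Unset Strict Implicit. Unset Printing Implicit Defensive.
Import Order.TTheory GRing.Theory Num.Theory.

Definition rowsum n (X : 'M[bool]_n) (i : 'I_n) : nat := \sum_(l < n) nat_of_bool (X i l).
Definition colsum n (X : 'M[bool]_n) (j : 'I_n) : nat := \sum_(k < n) nat_of_bool (X k j).

Definition feasible n (X : 'M[bool]_n) : Prop :=
  (forall i, rowsum X i = 1%N) /\ (forall j, colsum X j = 1%N).

Definition viol n (X : 'M[bool]_n) (i j : 'I_n) : int :=
  ((rowsum X i + colsum X j)%N%:Z - 2)%R.

Definition V_zero n (X : 'M[bool]_n) : Prop := forall i j, viol X i j = 0%R.

Definition set_entry n (X : 'M[bool]_n) (i j : 'I_n) (b : bool) : 'M[bool]_n :=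
  \matrix_(k, l) (if (k == i) && (l == j) then b else X k l).

(* One step of BFHA (nondeterministic: any admissible tie-breaking choice). *)
Definition bfha_step n (X Y : 'M[bool]_n) : Prop :=
  ~ V_zero X /\
  ( ( (exists i j, (1 <= viol X i j)%R) /\
      exists i j, X i j = true /\
        (forall k l, X k l = true -> (viol X k l <= viol X i j)%R) /\
        Y = set_entry X i j false )
  \/
    ( (forall i j, ~ (1 <= viol X i j)%R) /\
      (exists i j, (viol X i j <= -1)%R) /\
      exists i j, X i j = false /\
        (forall k l, X k l = false -> (viol X i j <= viol X k l)%R) /\
        Y = set_entry X i j true ) ).

From mathcomp Require Import all_boot all_order all_algebra zify.
From Stdlib Require Import Relations Wellfounded Wf_nat.
Set Implicit Arguments. Unset Strict Implicit. Unset Printing Implicit Defensive.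
Import Num.Theory.

(* While some line (row or column) holds two ones, some violation is positive
   and BFHA removes a one.  Once X is a partial permutation matrix, no
   violation is positive, and the number of empty rows and of empty columns
   both equal n minus the number of ones; so an empty row and an empty column
   exist together, the least violation -2 is attained exactly at their
   crossings, and adding a one there keeps a partial permutation with one
   more one.  Hence the measure below decreases along every step.  A stuck
   state has r_i + c_j = 2 for all i, j; summing over i for a fixed j, and
   over j for a fixed i, gives n c_j = n r_i, so every line sum is 1. *)

Section BoolCounting.
Variable I : finType.

Lemma sum_nat_bool_gt0 (F : I -> bool) :
  (0 < \sum_x nat_of_bool (F x))%N -> exists x, F x.
Proof.
move=> sum_gt0; case: (pickP F) => [x Fx|F0]; first by exists x.
by move: sum_gt0; rewrite big1 // => x _; rewrite F0.
Qed.

Lemma sum_nat_bool_ge1 (F : I -> bool) x : F x -> (1 <= \sum_y nat_of_bool (F y))%N.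
Proof. by move=> Fx; rewrite (bigD1 x) //= Fx. Qed.

Lemma sum_nat_bool_update (F : I -> bool) x b :
  (\sum_y nat_of_bool (if y == x then b else F y) + F x
   = \sum_y nat_of_bool (F y) + b)%N.
Proof.
rewrite (bigD1 x) //= [in RHS](bigD1 x) //= eqxx.
by rewrite (eq_bigr (fun y => nat_of_bool (F y))) => [|y /negbTE -> //]; lia.
Qed.

Lemma sum_le1_ltn_card (f : I -> nat) :
  (forall x, f x <= 1)%N -> (\sum_x f x < #|I|)%N = [exists x, f x == 0%N].
Proof.
move=> f_le1; rewrite -sum1_card.
case: (boolP [exists x, _]) => [/existsP [x /eqP fx0]|/existsPn f_neq0].
  rewrite (bigD1 x) //= [X in (_ < X)%N](bigD1 x) //= fx0 add1n ltnS.
  exact: leq_sum.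
by apply/negbTE; rewrite -leqNgt; apply: leq_sum => x _; rewrite lt0n f_neq0.
Qed.

End BoolCounting.

Section BitMatrices.
Variable n : nat.
Implicit Types (X : 'M[bool]_n) (i j k l : 'I_n) (b : bool).

Definition ones X : nat := \sum_(p : 'I_n * 'I_n) nat_of_bool (X p.1 p.2).

Lemma ones_rowsum X : ones X = (\sum_i rowsum X i)%N.
Proof. by rewrite /ones /rowsum pair_big. Qed.

Lemma ones_colsum X : ones X = (\sum_j colsum X j)%N.
Proof. by rewrite /ones /colsum exchange_big pair_big. Qed.

Lemma ones_le X : (ones X <= n * n)%N.
Proof.
have -> : (n * n = #|{: 'I_n * 'I_n}|)%N by rewrite card_prod card_ord.
by rewrite -sum1_card; apply: leq_sum => p _; case: (X _ _).
Qed.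

Lemma ones_set_entry X i j b : (ones (set_entry X i j b) + X i j = ones X + b)%N.
Proof.
rewrite -(sum_nat_bool_update (fun p : 'I_n * 'I_n => X p.1 p.2) (i, j)).
by congr (_ + _)%N; apply: eq_bigr => -[k l] _; rewrite mxE xpair_eqE.
Qed.

Lemma rowsum_set_entry X i j b k :
  (rowsum (set_entry X i j b) k <= rowsum X k + (k == i))%N.
Proof.
have [->|ki] := eqVneq k i.
  have -> : rowsum (set_entry X i j b) i
          = (\sum_l nat_of_bool (if l == j then b else X i l))%N.
    by apply: eq_bigr => l _; rewrite mxE eqxx.
  have := sum_nat_bool_update (X i) j b; rewrite -/(rowsum X i).
  by case: b (X i j) => -[] /=; lia.
rewrite addn0 /rowsum (eq_bigr (fun l => nat_of_bool (X k l))) // => l _.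
by rewrite mxE (negbTE ki).
Qed.

Lemma colsum_set_entry X i j b l :
  (colsum (set_entry X i j b) l <= colsum X l + (l == j))%N.
Proof.
have [->|lj] := eqVneq l j.
  have -> : colsum (set_entry X i j b) j
          = (\sum_k nat_of_bool (if k == i then b else X k j))%N.
    by apply: eq_bigr => k _; rewrite mxE eqxx andbT.
  have := sum_nat_bool_update (fun k => X k j) i b; rewrite -/(colsum X j).
  by case: b (X i j) => -[] /=; lia.
rewrite addn0 /colsum (eq_bigr (fun k => nat_of_bool (X k l))) // => k _.
by rewrite mxE (negbTE lj) andbF.
Qed.

Lemma viol_le X i j k l :
  (viol X i j <= viol X k l)%R = (rowsum X i + colsum X j <= rowsum X k + colsum X l)%N.
Proof. by rewrite /viol lerD2r lez_nat. Qed.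

Lemma viol_ge0 X i j : X i j -> (0 <= viol X i j)%R.
Proof.
move=> Xij; rewrite /viol subr_ge0 lez_nat.
have := sum_nat_bool_ge1 (F := X i) Xij; have := sum_nat_bool_ge1 (F := fun k => X k j) Xij.
by rewrite -/(rowsum X i) -/(colsum X j); lia.
Qed.

Lemma V_zeroP X : reflect (V_zero X) [forall i, forall j, viol X i j == 0%R].
Proof.
apply: (iffP forallP) => [V0 i j|V0 i]; last by apply/forallP => j; rewrite V0.
by apply/eqP; move/forallP: (V0 i).
Qed.

Definition partial_perm X : bool :=
  [forall i, rowsum X i <= 1]%N && [forall j, colsum X j <= 1]%N.

Lemma partial_permP X :
  reflect ((forall i, rowsum X i <= 1)%N /\ (forall j, colsum X j <= 1)%N) (partial_perm X).
Proof. by apply: (iffP andP) => -[/forallP r_le1 /forallP c_le1]. Qed.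

Lemma partial_perm_viol X :
  reflect (forall i j, ~ (1 <= viol X i j)%R) (partial_perm X).
Proof.
apply: (iffP (partial_permP X)) => [[r_le1 c_le1] i j|no_pos].
  by have := r_le1 i; have := c_le1 j; rewrite /viol; lia.
split=> [i|j].
- rewrite leqNgt; apply/negP => r_gt1.
  have [l Xil] := @sum_nat_bool_gt0 _ (X i) (ltnW r_gt1).
  have := sum_nat_bool_ge1 (F := fun k => X k l) Xil; rewrite -/(colsum X l) => c_ge1.
  by apply: (no_pos i l); rewrite /viol; lia.
- rewrite leqNgt; apply/negP => c_gt1.
  have [k Xkj] := @sum_nat_bool_gt0 _ (fun k => X k j) (ltnW c_gt1).
  have := sum_nat_bool_ge1 (F := X k) Xkj; rewrite -/(rowsum X k) => r_ge1.
  by apply: (no_pos k j); rewrite /viol; lia.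
Qed.

Lemma partial_perm_empty_row_col X : partial_perm X ->
  [exists i, rowsum X i == 0%N] = [exists j, colsum X j == 0%N].
Proof.
case/partial_permP => r_le1 c_le1.
rewrite -sum_le1_ltn_card // -sum_le1_ltn_card //.
by rewrite -ones_rowsum -ones_colsum.
Qed.

Lemma min_viol_empty_lines X i0 j0 i j :
    partial_perm X -> (viol X i0 j0 <= -1)%R ->
    (forall k l, X k l = false -> (viol X i j <= viol X k l)%R) ->
  rowsum X i = 0%N /\ colsum X j = 0%N.
Proof.
move=> ppX viol_neg ij_min.
have empty_row : [exists r, rowsum X r == 0%N].
  move: viol_neg; rewrite /viol => viol_neg.
  have [r0|c0] : rowsum X i0 = 0%N \/ colsum X j0 = 0%N by lia.
    by apply/existsP; exists i0; rewrite r0.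
  by rewrite partial_perm_empty_row_col //; apply/existsP; exists j0; rewrite c0.
have [r /eqP r0] := existsP empty_row.
move: empty_row; rewrite partial_perm_empty_row_col // => /existsP [c /eqP c0].
have Xrc : X r c = false.
  by apply/negbTE/negP => /viol_ge0; rewrite /viol r0 c0.
by have := ij_min r c Xrc; rewrite viol_le r0 c0; lia.
Qed.

Lemma partial_perm_set_entry X i j : partial_perm X ->
  rowsum X i = 0%N -> colsum X j = 0%N -> partial_perm (set_entry X i j true).
Proof.
case/partial_permP => r_le1 c_le1 r0 c0; apply/partial_permP; split=> [k|l].
  by have := rowsum_set_entry X i j true k; have := r_le1 k;
    case: eqVneq => [->|_]; rewrite ?r0 /=; lia.
by have := colsum_set_entry X i j true l; have := c_le1 l;
  case: eqVneq => [->|_]; rewrite ?c0 /=; lia.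
Qed.

Definition bfha_measure X : nat :=
  if partial_perm X then (n * n - ones X)%N else (n * n + 1 + ones X)%N.

Lemma bfha_step_measure_lt X Y : bfha_step X Y -> (bfha_measure Y < bfha_measure X)%N.
Proof.
case=> _ [[[i0 [j0 viol_pos]] [i [j [Xij [_ ->]]]]]
         | [no_pos [[i0 [j0 viol_neg]] [i [j [Xij [ij_min ->]]]]]]].
  have /negbTE not_ppX : ~~ partial_perm X.
    by apply/negP => /partial_perm_viol /(_ i0 j0).
  have := ones_set_entry X i j false; rewrite Xij /bfha_measure not_ppX.
  by case: (partial_perm _) => /=; lia.
have ppX := introT (partial_perm_viol X) no_pos.
have [r0 c0] := min_viol_empty_lines ppX viol_neg ij_min.
have := ones_set_entry X i j true; have := ones_le (set_entry X i j true).
by rewrite /bfha_measure partial_perm_set_entry // ppX Xij /=; lia.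
Qed.

Lemma bfha_step_wf : well_founded (fun Y X => bfha_step X Y).
Proof.
apply: (wf_incl _ _ _ _ (well_founded_ltof _ bfha_measure)) => Y X st.
exact/ltP/bfha_step_measure_lt.
Qed.

Lemma bfha_step_exists X : ~ V_zero X -> exists Y, bfha_step X Y.
Proof.
move=> nV0; case: (boolP [exists i, exists j, 1 <= viol X i j]%R).
  case/existsP=> i0 /existsP [j0 viol_pos].
  have [p0 Xp0] : exists p0 : 'I_n * 'I_n, X p0.1 p0.2.
    move: viol_pos; rewrite /viol => viol_pos.
    have [r_gt0|c_gt0] : (0 < rowsum X i0)%N \/ (0 < colsum X j0)%N by lia.
      by have [l Xl] := sum_nat_bool_gt0 r_gt0; exists (i0, l).
    by have [k Xk] := @sum_nat_bool_gt0 _ (fun k => X k j0) c_gt0; exists (k, j0).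
  case: (arg_maxnP (fun p => rowsum X p.1 + colsum X p.2)%N Xp0) => -[i j] /= Xij ij_max.
  exists (set_entry X i j false); split=> //; left; split; first by exists i0, j0.
  exists i, j; split=> //; split=> // k l Xkl.
  by rewrite viol_le; exact: (ij_max (k, l)).
move/existsPn=> no_pos_row.
have no_pos i j : ~ (1 <= viol X i j)%R.
  by move/existsPn: (no_pos_row i) => /(_ j)/negP.
have [i0 [j0 viol_neg]] : exists i j, (viol X i j <= -1)%R.
  move/V_zeroP/forallPn: nV0 => -[i0 /forallPn [j0 viol_ne0]].
  by exists i0, j0; have := no_pos i0 j0; move: viol_ne0; lia.
have X0 : ~~ X i0 j0 by apply/negP => /viol_ge0; move: viol_neg; lia.
case: (@arg_minnP _ (i0, j0) (fun p => ~~ X p.1 p.2)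
         (fun p => rowsum X p.1 + colsum X p.2)%N X0) => -[i j] /= /negbTE Xij ij_min.
exists (set_entry X i j true); split=> //; right; split=> //; split; first by exists i0, j0.
exists i, j; split=> //; split=> // k l Xkl.
by rewrite viol_le; apply: (ij_min (k, l)); rewrite /= Xkl.
Qed.

Lemma bfha_stuck_V_zero X : (forall Y, ~ bfha_step X Y) -> V_zero X.
Proof.
move=> stuck; apply/V_zeroP/negPn/negP => /V_zeroP nV0.
by have [Y] := bfha_step_exists nV0; apply: stuck.
Qed.

Lemma V_zero_feasible X : (0 < n)%N -> V_zero X -> feasible X.
Proof.
move=> n_gt0 V0.
have line2 i j : (rowsum X i + colsum X j = 2)%N by have := V0 i j; rewrite /viol; lia.
have sum_rows j : (ones X + n * colsum X j = n * 2)%N.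
  rewrite ones_rowsum -[n in (n * colsum _ _)%N]card_ord -sum_nat_const -big_split.
  by rewrite (eq_bigr (fun=> 2%N)) ?sum_nat_const ?card_ord // => i _; rewrite line2.
have sum_cols i : (n * rowsum X i + ones X = n * 2)%N.
  rewrite ones_colsum -[n in (n * rowsum _ _)%N]card_ord -sum_nat_const -big_split.
  by rewrite (eq_bigr (fun=> 2%N)) ?sum_nat_const ?card_ord // => j _; rewrite line2.
have r_eq_c i j : rowsum X i = colsum X j.
  by apply/eqP; rewrite -(eqn_pmul2l n_gt0); apply/eqP; have := sum_rows j;
    have := sum_cols i; lia.
by split=> i; have := line2 i i; have := r_eq_c i i; lia.
Qed.

End BitMatrices.

Theorem theorem1 (n : nat) (hn : (1 <= n)%N) (X : 'M[bool]_n)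
  (hX : ~ feasible X) :
  Acc (fun Z Y => bfha_step Y Z) X /\
  (forall Y, clos_refl_trans _ (@bfha_step n) X Y ->
     (forall Z, ~ bfha_step Y Z) -> V_zero Y /\ feasible Y).
Proof.
split; first exact: bfha_step_wf.
move=> Y _ stuck; have V0 := bfha_stuck_V_zero stuck.
by split; last exact: V_zero_feasible.
Qed.
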